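(* Let $B_J\in\mathbb R^{n\times n}$ satisfy $B_J\ge O$ elementwise and let $\mathcal B=(B_1,\dots,B_d)$ be a splitting of $B_J$. Assume $\lambda:=\rho(T(\mathcal B))>0$. Then $T(\mathcal B)$ has a nonnegative eigenvector $[\alpha_1^T,\dots,\alpha_d^T]^T$ (with $\alpha_p\in\mathbb R^n$) for the eigenvalue $\lambda$ such that, elementwise, $0\le\lambda\alpha_1\le\alpha_d\le\alpha_{d-1}\le\cdots\le\alpha_2\le\alpha_1$ if $\lambda\le1$, and $0\le\alpha_1\le\alpha_2\le\cdots\le\alpha_{d-1}\le\alpha_d\le\lambda\alpha_1$ if $\lambda\ge1$.
   Context: For $B\in\mathbb R^{n\times n}$, a splitting of $B$ of order $d\ge1$ is an ordered $d$-tuple $\mathcal B=(B_1,\dots,B_d)$ of real $n\times n$ matrices with $B_p\neq O$ for all $p$, $\sum_{p=1}^d B_p=B$, and $B_p\circ B_q=O$ (Hadamard product) for $p\ne q$. The iteration matrix of $\mathcal B$ is the $dn\times dn$ matrix $T(\mathcal B)=(I_{dn}-\mathcal L)^{-1}\mathcal U$, where $\mathcal L,\mathcal U$ are $d\times d$ block matrices with $n\times n$ blocks, $\mathcal L_{ij}=B_j$ if $i>j$ and $O$ otherwise, $\mathcal U_{ij}=B_j$ if $i\le j$ and $O$ otherwise. $\rho$ denotes spectral radius; inequalities between vectors/matrices are elementwise. *)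

From HB Require Import structures.
From mathcomp Require Import all_boot all_order all_algebra.
From mathcomp Require Import reals.
From mathcomp Require Import complex.
Set Implicit Arguments. Unset Strict Implicit. Unset Printing Implicit Defensive.
Import Order.TTheory GRing.Theory Num.Theory.
Local Open Scope ring_scope.

Definition mx_le (R : realType) (m k : nat) (A B : 'M[R]_(m, k)) : Prop :=
  forall i j, A i j <= B i j.

Definition is_spectral_radius (R : realType) (N : nat) (A : 'M[R]_N) (r : R) : Prop :=
  let p := char_poly (map_mx (fun x : R => (x%:C)%C) A) in
  (exists2 z : R[i], root p z & `|z| = (r%:C)%C) /\
  (forall z : R[i], root p z -> `|z| <= (r%:C)%C).

Definition is_splitting (R : realType) (n d : nat) (B : 'M[R]_n) (Bs : 'I_d -> 'M[R]_n) : Prop :=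
  [/\ (0 < d)%N,
      forall p, Bs p != 0,
      \sum_(p < d) Bs p = B &
      forall p q : 'I_d, p != q -> forall i j, Bs p i j * Bs q i j = 0].

Definition blockL (R : realType) (n d : nat) (Bs : 'I_d -> 'M[R]_n)
  : 'M[R]_(\sum_(p < d) n) :=
  \mxblock_(i < d, j < d) (if (j < i)%N then Bs j else 0).

Definition blockU (R : realType) (n d : nat) (Bs : 'I_d -> 'M[R]_n)
  : 'M[R]_(\sum_(p < d) n) :=
  \mxblock_(i < d, j < d) (if (i <= j)%N then Bs j else 0).

Definition iterT (R : realType) (n d : nat) (Bs : 'I_d -> 'M[R]_n)
  : 'M[R]_(\sum_(p < d) n) :=
  invmx (1%:M - blockL Bs) *m blockU Bs.

From HB Require Import structures.
From mathcomp Require Import all_boot all_order all_algebra.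
From mathcomp Require Import reals complex polyrcf.
From mathcomp Require classical_sets.
From mathcomp Require Import lra.
Set Implicit Arguments. Unset Strict Implicit. Unset Printing Implicit Defensive.
Import Order.TTheory GRing.Theory Num.Theory.
Local Open Scope ring_scope.

(* Since the splitting of B_J >= 0 is nonnegative, forward substitution shows that
   T = (I - L)^-1 U is entrywise nonnegative, so (weak Perron-Frobenius) its spectral
   radius lambda has a nonnegative eigenvector x = [a_1; ...; a_d].

   Perron-Frobenius is proved through the Collatz-Wielandt number
   mu = sup {t | t w <= A w for some w >= 0, w <> 0}, which bounds the modulus of every
   eigenvalue. For t > mu the matrix t - A has a nonnegative inverse, so the entries of
   adj(X - A) are nonnegative right of mu. Dividing adj(X - A) by the largest power of
   X - mu dividing all its entries gives H with (X - A) H = g I and H(mu) >= 0, H(mu) <> 0.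
   If g(mu) were positive, H(mu) / g(mu) would be a nonnegative inverse of mu - A, which
   would keep every t of the Collatz-Wielandt set a fixed distance below mu; hence
   g(mu) = 0 and a nonzero column of H(mu) is an eigenvector for mu.

   Blockwise, U x = lambda (I - L) x reads lambda a_i = S - (1 - lambda) L_i with
   S = sum_j B_j a_j and L_i = sum_(j < i) B_j a_j. Hence
   lambda (a_p - a_(p+1)) = (1 - lambda) B_p a_p and
   lambda (a_d - lambda a_1) = (1 - lambda) B_d a_d, and the sign of 1 - lambda orders
   the blocks. *)

Lemma char_poly_mx_horner (F : fieldType) n (M : 'M[F]_n) t :
  map_mx (horner_eval t) (char_poly_mx M) = t%:M - M.
Proof.
apply/matrixP => i j; rewrite !mxE /horner_eval.
by rewrite hornerD hornerN hornerMn hornerX hornerC.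
Qed.

Lemma root_char_polyP (F : fieldType) n (M : 'M[F]_n) t :
  reflect (exists2 u : 'cV_n, u != 0 & M *m u = t *: u) (root (char_poly M) t).
Proof.
rewrite /root /char_poly -horner_evalE -det_map_mx char_poly_mx_horner -det_tr.
apply: (iffP det0P) => -[u u_neq0 Mu]; exists u^T; rewrite ?trmx_eq0 //.
  apply/eqP; rewrite eq_sym -subr_eq0 -mul_scalar_mx -mulmxBl.
  by rewrite -[_ - _]trmxK -trmx_mul Mu trmx0.
by rewrite -trmx_mul mulmxBl mul_scalar_mx Mu subrr trmx0.
Qed.

Lemma poly_ge0_right (R : rcfType) (p : {poly R}) x :
  (forall t, x < t -> 0 <= p.[t]) -> 0 <= p.[x].
Proof.
move=> p_ge0; rewrite leNgt; apply/negP => px_lt0.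
have [e e_gt0 pe] : exists2 e, 0 < e & forall y, `|y - x| < e -> `|p.[y] - p.[x]| < - p.[x].
  by apply: poly_cont; rewrite oppr_gt0.
have /pe : `|x + e / 2 - x| < e.
  by rewrite addrAC subrr add0r gtr0_norm ?ltr_pdivrMr ?ltr_pMr ?ltr1n ?divr_gt0.
move/ltr_normlW; rewrite ltrBlDr addNr; apply/negP; rewrite -leNgt.
by apply: p_ge0; rewrite ltrDl divr_gt0.
Qed.

Lemma poly_mx_factor (F : fieldType) m k (M : 'M[{poly F}]_(m, k)) c :
  M != 0 -> exists e (H : 'M_(m, k)),
    M = ('X - c%:P) ^+ e *: H /\ map_mx (horner_eval c) H != 0.
Proof.
case/matrix0Pn=> i0 [j0 Mij0].
have [[i j] /= Mij Mmin] := @arg_minnP _ (i0, j0)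
  (fun ij => M ij.1 ij.2 != 0) (fun ij => mup c (M ij.1 ij.2)) Mij0.
set e := mup c (M i j) in Mmin.
have dvdM i' j' : ('X - c%:P) ^+ e %| M i' j'.
  have [->|nz] := eqVneq (M i' j') 0; first exact: dvdp0.
  by rewrite -mup_geq //; exact: (Mmin (i', j')).
exists e, (map_mx (fun p => p %/ ('X - c%:P) ^+ e) M); split.
  by apply/matrixP => i' j'; rewrite !mxE mulrC divpK.
apply/matrix0Pn; exists i, j; rewrite mxE horner_evalE -rootE -dvdp_XsubCl.
have : ~~ (('X - c%:P) ^+ e.+1 %| M i j) by rewrite -mup_leq.
apply: contra; rewrite mxE => dvdX; rewrite -[M i j](divpK (dvdM i j)) exprS.
exact: dvdp_mul dvdX (dvdpp _).
Qed.

Lemma scalemx_eq_scalar (R : idomainType) N (c q : R) (X : 'M[R]_N) (i0 : 'I_N) :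
  c != 0 -> c *: X = q%:M -> X = (X i0 i0)%:M /\ c * X i0 i0 = q.
Proof.
move=> c_neq0 cX; have cXE i j : c * X i j = q *+ (i == j).
  by have /matrixP/(_ i j) := cX; rewrite !mxE.
have Xdiag i j : X i j = X i0 i0 *+ (i == j).
  apply: (mulfI c_neq0); rewrite cXE mulrnAr cXE eqxx.
  by case: (i == j).
by split; [apply/matrixP => i j; rewrite Xdiag mxE | rewrite cXE eqxx].
Qed.

Lemma mx_le_mul2l (R : realType) m n k (A : 'M[R]_(m, n)) (B C : 'M[R]_(n, k)) :
  mx_le 0 A -> mx_le B C -> mx_le (A *m B) (A *m C).
Proof.
move=> A_ge0 BC i j; rewrite !mxE; apply: ler_sum => l _.
by apply: ler_wpM2l; [have := A_ge0 i l; rewrite mxE | exact: BC].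
Qed.

Lemma mulmx_ge0 (R : realType) m n k (A : 'M[R]_(m, n)) (B : 'M[R]_(n, k)) :
  mx_le 0 A -> mx_le 0 B -> mx_le 0 (A *m B).
Proof. by move=> A_ge0 /(mx_le_mul2l A_ge0); rewrite mulmx0. Qed.

Lemma cV_ge0_argmax (R : realType) N (w : 'cV[R]_N) : mx_le 0 w -> w != 0 ->
  exists j, 0 < w j 0 /\ forall k, w k 0 <= w j 0.
Proof.
move=> w_ge0 /matrix0Pn[i0 [z wi0]]; rewrite ord1 in wi0.
have [j _ jmax] := @arg_maxP _ _ _ i0 xpredT (fun i => w i 0) isT.
exists j; split=> [|k]; last exact: jmax.
have := w_ge0 i0 0; rewrite mxE le_eqVlt eq_sym (negbTE wi0) /= => wi0_gt0.
exact: lt_le_trans wi0_gt0 (jmax i0 isT).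
Qed.

Lemma mulmx_le_sum_max (R : realType) N (Y : 'M[R]_N) (w : 'cV[R]_N) j :
  mx_le 0 Y -> mx_le 0 w -> (forall k, w k 0 <= w j 0) ->
  (Y *m w) j 0 <= (\sum_i \sum_l Y i l) * w j 0.
Proof.
move=> Y_ge0 w_ge0 wmax; have Yij i l : 0 <= Y i l by have := Y_ge0 i l; rewrite mxE.
rewrite mxE (@le_trans _ _ ((\sum_l Y j l) * w j 0)) //.
  by rewrite big_distrl /=; apply: ler_sum => l _; apply: ler_wpM2l.
have wj_ge0 : 0 <= w j 0 by have := w_ge0 j 0; rewrite mxE.
rewrite ler_wpM2r // [leRHS](bigD1 j) //= lerDl.
by apply: sumr_ge0 => i _; apply: sumr_ge0.
Qed.

Section CollatzWielandt.
Variables (R : realType) (N : nat) (A : 'M[R]_N).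
Hypothesis A_ge0 : mx_le 0 A.

Definition cw_set : classical_sets.set R := fun t =>
  exists w : 'cV[R]_N, [/\ mx_le 0 w, w != 0 & mx_le (t *: w) (A *m w)].

Definition cw_sup := sup cw_set.

Lemma cw_le_sum t : cw_set t -> t <= \sum_i \sum_k A i k.
Proof.
case=> w [w_ge0 w_neq0 tw]; have [j [wj_gt0 wmax]] := cV_ge0_argmax w_ge0 w_neq0.
rewrite -(ler_pM2r wj_gt0) (le_trans _ (mulmx_le_sum_max A_ge0 w_ge0 wmax)) //.
by have := tw j 0; rewrite mxE.
Qed.

Lemma cw_complex_eigen (z : R[i]) (r : R) (u : 'cV[R[i]]_N) :
  u != 0 -> map_mx (real_complex R) A *m u = z *: u -> `|z| = (r%:C)%C -> cw_set r.
Proof.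
move=> u_neq0 Au zr.
have normE (c : R[i]) : `|c| = ((complex.Re `|c|)%:C)%C by rewrite normc_def.
exists (map_mx (fun c => complex.Re `|c|) u); split.
- by move=> i j; rewrite !mxE -ler0c -normE.
- case/matrix0Pn: u_neq0 => i [j uij]; apply/matrix0Pn; exists i, j.
  by rewrite mxE -(fmorph_eq0 (real_complex R)); rewrite -normr_eq0 normE in uij.
- move=> i j; rewrite !mxE -lecR rmorphM rmorph_sum /= -normE -zr -normrM.
  have <- : (map_mx (real_complex R) A *m u) i j = z * u i j by rewrite Au mxE.
  rewrite mxE (le_trans (ler_norm_sum _ _ _)) //; apply: ler_sum => k _.
  rewrite normrM !mxE rmorphM /= -normE ger0_norm // ler0c.
  by have := A_ge0 i k; rewrite mxE.
Qed.

Lemma cw_root t : 0 <= t -> root (char_poly A) t -> cw_set t.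
Proof.
move=> t_ge0 /(rmorph_root (real_complex R)).
rewrite map_char_poly => /root_char_polyP[u u_neq0 Au].
apply: cw_complex_eigen u_neq0 Au _.
by rewrite normc_def /= expr0n /= addr0 sqrtr_sqr ger0_norm.
Qed.

Lemma cw_gap (Y : 'M[R]_N) (c s t : R) :
  mx_le 0 Y -> Y *m (s%:M - A) = c%:M -> cw_set t -> t <= s ->
  c <= (s - t) * \sum_i \sum_l Y i l.
Proof.
move=> Y_ge0 YE [w [w_ge0 w_neq0 tw]] t_le_s.
have [j [wj_gt0 wmax]] := cV_ge0_argmax w_ge0 w_neq0.
have gap : mx_le ((s%:M - A) *m w) ((s - t) *: w).
  by move=> i l; have := tw i l; rewrite mulmxBl mul_scalar_mx !mxE; lra.
rewrite -(ler_pM2r wj_gt0); have := mx_le_mul2l Y_ge0 gap j 0.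
rewrite mulmxA YE mul_scalar_mx -scalemxAr [(c *: w) j 0]mxE.
rewrite [((s - t) *: (Y *m w)) j 0]mxE => /le_trans; apply.
by rewrite -mulrA ler_wpM2l ?subr_ge0 // mulmx_le_sum_max.
Qed.

Section PositiveDimension.
Hypothesis N_gt0 : (0 < N)%N.

Lemma cw0 : cw_set 0.
Proof.
exists (const_mx 1); split.
- by move=> i j; rewrite !mxE.
- by apply/matrix0Pn; exists (Ordinal N_gt0), 0; rewrite mxE oner_eq0.
- by move=> i j; rewrite scale0r; apply: mulmx_ge0 => // k l; rewrite !mxE.
Qed.

Lemma cw_has_sup : classical_sets.has_sup cw_set.
Proof.
by split; [exists 0; exact: cw0 | exists (\sum_i \sum_k A i k) => t /cw_le_sum].
Qed.

Lemma cw_le_sup t : cw_set t -> t <= cw_sup.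
Proof. exact: sup_upper_bound cw_has_sup t. Qed.

Lemma cw_sup_ge0 : 0 <= cw_sup.
Proof. exact: cw_le_sup cw0. Qed.

Lemma resolvent_ge0 t (x : 'cV[R]_N) :
  cw_sup < t -> mx_le 0 ((t%:M - A) *m x) -> mx_le 0 x.
Proof.
move=> sup_lt_t y_ge0; have Aik i k : 0 <= A i k by have := A_ge0 i k; rewrite mxE.
(* The negative part of x would put t into the Collatz-Wielandt set. *)
pose w := map_mx (fun a => Num.max 0 (- a)) x.
have [w0|w_neq0] := eqVneq w 0.
  move=> i j; have /matrixP/(_ i j) := w0; rewrite !mxE => /eqP.
  by rewrite eq_le ge_max lexx oppr_le0 => /andP[].
have t_ge0 : 0 <= t by apply: le_trans cw_sup_ge0 (ltW sup_lt_t).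
suff /cw_le_sup : cw_set t by rewrite leNgt sup_lt_t.
exists w; split=> // [i j|i j]; rewrite !mxE ord1 ?le_max ?lexx //.
have := y_ge0 i 0; rewrite mulmxBl mul_scalar_mx !mxE subr_ge0 => txA.
rewrite maxr_pMr // mulr0 ge_max; apply/andP; split.
  by apply: sumr_ge0 => k _; rewrite mxE mulr_ge0 // le_max lexx.
rewrite mulrN (@le_trans _ _ (- \sum_k A i k * x k 0)) ?lerN2 // -sumrN.
by apply: ler_sum => k _; rewrite mxE -mulrN ler_wpM2l // le_max lexx orbT.
Qed.

Lemma char_poly_gt0 t : cw_sup < t -> 0 < (char_poly A).[t].
Proof.
move=> sup_lt_t; have t_ge0 : 0 <= t by apply: le_trans cw_sup_ge0 (ltW sup_lt_t).
have noroot : {in `[t, +oo[, forall s, ~~ root (char_poly A) s}.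
  move=> s; rewrite in_itv /= andbT => t_le_s; apply/negP.
  move/(cw_root (le_trans t_ge0 t_le_s))/cw_le_sup; apply/negP; rewrite -ltNge.
  exact: lt_le_trans t_le_s.
have /(_ t) := sgp_pinftyP noroot; rewrite in_itv /= lexx => /(_ isT)/eqP.
by rewrite /sgp_pinfty (monicP (char_poly_monic A)) sgr1 sgr_cp0.
Qed.

Lemma adj_char_poly_mx_ge0 t : cw_sup < t ->
  mx_le 0 (map_mx (horner_eval t) (\adj (char_poly_mx A))).
Proof.
move=> sup_lt_t i j; set F := map_mx _ _.
suff /(_ i 0) : mx_le 0 (col j F) by rewrite !mxE.
apply: (resolvent_ge0 sup_lt_t) => k l.
rewrite -char_poly_mx_horner colE mulmxA -map_mxM mul_mx_adj map_scalar_mx /=.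
rewrite mul_scalar_mx !mxE horner_evalE mulr_ge0 ?ler0n //.
exact: ltW (char_poly_gt0 sup_lt_t).
Qed.

Lemma nonneg_resolvent_at_sup_le0 (Y : 'M[R]_N) c :
  mx_le 0 Y -> (cw_sup%:M - A) *m Y = c%:M -> c <= 0.
Proof.
move=> Y_ge0 YE; rewrite leNgt; apply/negP => c_gt0.
have YE' : Y *m (cw_sup%:M - A) = c%:M.
  have /mulmx1C : (cw_sup%:M - A) *m (c^-1 *: Y) = 1%:M.
    by rewrite -scalemxAr YE scale_scalar_mx mulVf ?gt_eqF.
  rewrite -scalemxAl => /(congr1 ( *:%R c)).
  by rewrite scalerA divff ?gt_eqF // scale1r scale_scalar_mx mulr1.
set K := \sum_i \sum_l Y i l.
have K_ge0 : 0 <= K.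
  by apply: sumr_ge0 => i _; apply: sumr_ge0 => l _; have := Y_ge0 i l; rewrite mxE.
have K1_gt0 : 0 < K + 1 by rewrite ltr_wpDl.
have [t cw_t] := sup_adherent (divr_gt0 c_gt0 K1_gt0) cw_has_sup.
rewrite -/cw_sup ltrBlDr -ltrBlDl => gap_lt.
have := cw_gap Y_ge0 YE' cw_t (cw_le_sup cw_t); apply/negP; rewrite -ltNge.
apply: le_lt_trans (ler_wpM2r K_ge0 (ltW gap_lt)) _.
by rewrite mulrAC ltr_pdivrMr // ltr_pM2l // ltrDl.
Qed.

Lemma cw_sup_eigenvector :
  exists h : 'cV[R]_N, [/\ mx_le 0 h, h != 0 & A *m h = cw_sup *: h].
Proof.
pose mu := cw_sup; pose i0 := Ordinal N_gt0.
have adj_neq0 : \adj (char_poly_mx A) != 0.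
  apply: contra_neq (monic_neq0 (char_poly_monic A)) => adj0.
  have /matrixP/(_ i0 i0) := mul_mx_adj (char_poly_mx A).
  by rewrite adj0 mulmx0 !mxE eqxx mulr1n => /esym.
have [e [H [adjE Hmu_neq0]]] := poly_mx_factor mu adj_neq0.
set P := ('X - mu%:P) ^+ e in adjE.
have P_neq0 : P != 0 by rewrite expf_neq0 // polyXsubC_eq0.
have [HE qE] : char_poly_mx A *m H = ((char_poly_mx A *m H) i0 i0)%:M /\
    P * (char_poly_mx A *m H) i0 i0 = char_poly A.
  by apply: scalemx_eq_scalar P_neq0 _; rewrite scalemxAr -adjE mul_mx_adj.
set g := (char_poly_mx A *m H) i0 i0 in HE qE.
have P_gt0 t : mu < t -> 0 < P.[t].
  by move=> mu_lt_t; rewrite horner_exp hornerXsubC exprn_gt0 // subr_gt0.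
have H_ge0 : mx_le 0 (map_mx (horner_eval mu) H).
  move=> i j; rewrite !mxE horner_evalE; apply: poly_ge0_right => t mu_lt_t.
  have := adj_char_poly_mx_ge0 mu_lt_t i j.
  by rewrite adjE !mxE horner_evalE hornerM pmulr_rge0 // P_gt0.
have g_ge0 : 0 <= g.[mu].
  apply: poly_ge0_right => t mu_lt_t; apply: ltW.
  by rewrite -(pmulr_rgt0 _ (P_gt0 t mu_lt_t)) -hornerM qE char_poly_gt0.
have resolvent : (mu%:M - A) *m map_mx (horner_eval mu) H = g.[mu]%:M.
  by rewrite -char_poly_mx_horner -map_mxM HE map_scalar_mx.
have g0 : g.[mu] = 0.
  by apply/eqP; rewrite eq_le g_ge0 (nonneg_resolvent_at_sup_le0 H_ge0 resolvent).
case/matrix0Pn: Hmu_neq0 => i [j Hij].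
exists (col j (map_mx (horner_eval mu) H)); split.
- by move=> k l; rewrite !mxE; have := H_ge0 k j; rewrite !mxE.
- by apply/matrix0Pn; exists i, 0; rewrite mxE.
- apply/eqP; rewrite eq_sym -subr_eq0 -mul_scalar_mx -mulmxBl colE mulmxA.
  by rewrite resolvent g0 mul_scalar_mx scale0r.
Qed.

End PositiveDimension.
End CollatzWielandt.

Lemma spectral_radius_eigenvector (R : realType) N (A : 'M[R]_N) rho :
  mx_le 0 A -> is_spectral_radius A rho ->
  exists h : 'cV[R]_N, [/\ mx_le 0 h, h != 0 & A *m h = rho *: h].
Proof.
move=> A_ge0 [[z /root_char_polyP[u u_neq0 Au] zE] rho_max].
have cw_rho := cw_complex_eigen A_ge0 u_neq0 Au zE.
have N_gt0 : (0 < N)%N by case/matrix0Pn: u_neq0 => i _; exact: leq_ltn_trans (ltn_ord i).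
have [h [h_ge0 h_neq0 Ah]] := cw_sup_eigenvector A_ge0 N_gt0.
have /rho_max : root (char_poly (map_mx (real_complex R) A)) ((cw_sup A)%:C)%C.
  by rewrite -map_char_poly rmorph_root //; apply/root_char_polyP; exists h.
rewrite ger0_norm ?ler0c ?cw_sup_ge0 // lecR => sup_le_rho.
suff -> : rho = cw_sup A by exists h.
by apply/eqP; rewrite eq_le sup_le_rho cw_le_sup.
Qed.

Lemma ord_ltn_ind d (P : 'I_d -> Prop) :
  (forall i : 'I_d, (forall j : 'I_d, (j < i)%N -> P j) -> P i) -> forall i, P i.
Proof.
move=> IH i; have [m] := ubnP i; elim: m i => // m IHm i /ltnSE le_im.
by apply: IH => j lt_ji; apply: IHm; exact: leq_trans lt_ji le_im.
Qed.

Lemma scale_mxcol (R : pzRingType) d (p_ : 'I_d -> nat) m c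
    (B_ : forall i, 'M[R]_(p_ i, m)) :
  c *: \mxcol_i B_ i = \mxcol_i (c *: B_ i).
Proof. by apply/matrixP => s t; rewrite !mxE. Qed.

Lemma mxcol_ge0P (R : realType) d n (B_ : 'I_d -> 'cV[R]_n) :
  mx_le 0 (\mxcol_i B_ i) <-> forall i, mx_le 0 (B_ i).
Proof.
split=> [B_ge0 i k l | B_ge0 s t].
  by rewrite -(mxcolK B_ i) mxE; have := B_ge0 (tagnat.Rank i k) l; rewrite !mxE.
by rewrite !mxE; have := B_ge0 _ (tagnat.sig2 s) t; rewrite mxE.
Qed.

Section GaussSeidel.
Variables (R : realType) (n d : nat) (Bs : 'I_d -> 'M[R]_n).

Definition lower_sum (a : 'I_d -> 'cV[R]_n) (i : 'I_d) :=
  \sum_(j < d | (j < i)%N) Bs j *m a j.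
Definition upper_sum (a : 'I_d -> 'cV[R]_n) (i : 'I_d) :=
  \sum_(j < d | (i <= j)%N) Bs j *m a j.

Lemma blockL_mxcol a : blockL Bs *m \mxcol_j a j = \mxcol_i lower_sum a i.
Proof.
rewrite /blockL mul_mxblock_mxrow; apply: eq_mxcol => i.
rewrite /lower_sum [RHS]big_mkcond.
by apply: eq_bigr => j _; case: ifP; rewrite ?mul0mx.
Qed.

Lemma blockU_mxcol a : blockU Bs *m \mxcol_j a j = \mxcol_i upper_sum a i.
Proof.
rewrite /blockU mul_mxblock_mxrow; apply: eq_mxcol => i.
rewrite /upper_sum [RHS]big_mkcond.
by apply: eq_bigr => j _; case: ifP; rewrite ?mul0mx.
Qed.

Lemma one_sub_blockL_mxcol a :
  (1%:M - blockL Bs) *m \mxcol_j a j = \mxcol_i (a i - lower_sum a i).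
Proof. by rewrite mulmxBl mul1mx blockL_mxcol mxcolB. Qed.

Lemma lower_add_upper a i : lower_sum a i + upper_sum a i = \sum_j Bs j *m a j.
Proof.
rewrite [RHS](bigID (fun j : 'I_d => (i <= j)%N)) addrC; congr (_ + _).
by apply: eq_bigl => j; rewrite ltnNge.
Qed.

Lemma lower_sum_first a i : val i = 0%N -> lower_sum a i = 0.
Proof. by move=> i0; rewrite /lower_sum big_pred0 // => j; rewrite i0. Qed.

Lemma lower_sum_succ a p q : val q = (val p).+1 ->
  lower_sum a q = lower_sum a p + Bs p *m a p.
Proof.
move=> qE; rewrite /lower_sum (bigD1 p) /= ?qE // addrC; congr (_ + _).
by apply: eq_bigl => j; rewrite ltnS [RHS]ltn_neqAle andbC.
Qed.

Lemma upper_sum_last a q : val q = d.-1 -> upper_sum a q = Bs q *m a q.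
Proof.
move=> qE; rewrite /upper_sum (big_pred1 q) // => j /=.
have d_gt0 : (0 < d)%N := leq_ltn_trans (leq0n q) (ltn_ord q).
apply/idP/eqP => [q_le_j|->//]; apply/val_inj/eqP.
by rewrite eqn_leq q_le_j andbT -ltnS qE prednK ?ltn_ord.
Qed.

Lemma det_one_sub_blockL : \det (1%:M - blockL Bs) = 1.
Proof.
have L_trig : is_trig_mx (blockL Bs).
  apply/is_trig_mxblockP; split=> [i j ij|i]; last by rewrite ltnn mx0_is_trig.
  by rewrite ltnNge ltnW.
rewrite det_trig; last first.
  apply/is_trig_mxP => s t st; move: (is_trig_mxP L_trig s t st).
  by rewrite !mxE => ->; rewrite subr0; case: eqP st => // ->; rewrite ltnn.
by rewrite big1 // => s _; rewrite !mxE eqxx ltnn mxE subr0.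
Qed.

Lemma unitmx_one_sub_blockL : (1%:M - blockL Bs) \in unitmx.
Proof. by rewrite unitmxE det_one_sub_blockL unitr1. Qed.

Lemma iterT_eigen_blocks a lam :
  iterT Bs *m \mxcol_j a j = lam *: \mxcol_j a j ->
  forall i, upper_sum a i = lam *: (a i - lower_sum a i).
Proof.
move=> /(congr1 (mulmx (1%:M - blockL Bs))).
rewrite /iterT !mulmxA mulmxV ?unitmx_one_sub_blockL // mul1mx -scalemxAr.
by rewrite blockU_mxcol one_sub_blockL_mxcol scale_mxcol => /eq_mxcolP.
Qed.

Lemma iterT_eigen_balance a lam :
  iterT Bs *m \mxcol_j a j = lam *: \mxcol_j a j ->
  forall i, lam *: a i = \sum_j Bs j *m a j - (1 - lam) *: lower_sum a i.
Proof.
move=> Ta i; apply/matrixP => k l.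
have /matrixP/(_ k l) := iterT_eigen_blocks Ta i.
have /matrixP/(_ k l) := lower_add_upper a i.
by rewrite !mxE; lra.
Qed.

Lemma eigen_blocks_step (a : 'I_d -> 'cV[R]_n) lam p q :
  iterT Bs *m \mxcol_j a j = lam *: \mxcol_j a j -> val q = (val p).+1 ->
  lam *: (a p - a q) = (1 - lam) *: (Bs p *m a p).
Proof.
move=> Ta qE; apply/matrixP => k l.
have /matrixP/(_ k l) := iterT_eigen_balance Ta p.
have /matrixP/(_ k l) := iterT_eigen_balance Ta q.
by rewrite (lower_sum_succ a qE) !mxE; lra.
Qed.

Lemma eigen_blocks_wrap (a : 'I_d -> 'cV[R]_n) lam p q :
  iterT Bs *m \mxcol_j a j = lam *: \mxcol_j a j -> val p = 0%N -> val q = d.-1 ->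
  lam *: (a q - lam *: a p) = (1 - lam) *: (Bs q *m a q).
Proof.
move=> Ta pE qE; have Lq : lower_sum a q = \sum_j Bs j *m a j - Bs q *m a q.
  by rewrite -(lower_add_upper a q) (upper_sum_last a qE) addrK.
apply/matrixP => k l.
have /matrixP/(_ k l) := iterT_eigen_balance Ta p.
have /matrixP/(_ k l) := iterT_eigen_balance Ta q.
rewrite (lower_sum_first a pE) Lq !mxE => bal_q bal_p.
by rewrite mulrBr bal_p; lra.
Qed.

Section NonnegativeSplitting.
Hypothesis Bs_ge0 : forall p, mx_le 0 (Bs p).

Lemma lower_sum_ge0 (a : 'I_d -> 'cV[R]_n) (i : 'I_d) :
  (forall j : 'I_d, (j < i)%N -> mx_le 0 (a j)) -> mx_le 0 (lower_sum a i).
Proof.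
move=> a_ge0 k l; rewrite /lower_sum summxE mxE sumr_ge0 // => j ji.
by have := mulmx_ge0 (Bs_ge0 j) (a_ge0 j ji) k l; rewrite mxE.
Qed.

Lemma one_sub_blockL_inv_ge0 (z : 'cV[R]_(\sum_(p < d) n)) :
  mx_le 0 ((1%:M - blockL Bs) *m z) -> mx_le 0 z.
Proof.
rewrite -[z]submxcolK one_sub_blockL_mxcol => /mxcol_ge0P y_ge0.
apply/mxcol_ge0P; elim/ord_ltn_ind => i IH k l.
have := y_ge0 i k l; have := lower_sum_ge0 IH k l; rewrite !mxE; lra.
Qed.

Lemma iterT_ge0 : mx_le 0 (iterT Bs).
Proof.
move=> s t; suff /(_ s 0) : mx_le 0 (col t (iterT Bs)) by rewrite !mxE.
apply: one_sub_blockL_inv_ge0.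
rewrite /iterT colE !mulmxA mulmxV ?unitmx_one_sub_blockL // mul1mx -colE => k l.
rewrite !mxE; case: ifP => _; last by rewrite mxE.
by have := Bs_ge0 (tagnat.sig1 t) (tagnat.sig2 k) (tagnat.sig2 t); rewrite mxE.
Qed.
End NonnegativeSplitting.
End GaussSeidel.

Lemma splitting_ge0 (R : realType) n d (B : 'M[R]_n) (Bs : 'I_d -> 'M[R]_n) :
  mx_le 0 B -> is_splitting B Bs -> forall p, mx_le 0 (Bs p).
Proof.
move=> B_ge0 [_ _ BE disj] p i j; rewrite mxE.
have [->//|nz] := eqVneq (Bs p i j) 0.
suff <- : B i j = Bs p i j by have := B_ge0 i j; rewrite mxE.
rewrite -BE summxE (bigD1 p) //= big1 ?addr0 // => q qp.
have := disj p q; rewrite eq_sym qp => /(_ isT i j)/eqP.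
by rewrite mulf_eq0 (negbTE nz) => /eqP.
Qed.

Lemma mx_le_eigen_gap (R : realType) m k (lam : R) (x y v : 'M[R]_(m, k)) :
  0 < lam -> mx_le 0 v -> lam *: (x - y) = (1 - lam) *: v ->
  (lam <= 1 -> mx_le y x) /\ (1 <= lam -> mx_le x y).
Proof.
move=> lam_gt0 v_ge0 /matrixP E; split=> lam_1 i j;
  have := E i j; have := v_ge0 i j; rewrite !mxE; nra.
Qed.

Unset Implicit Arguments. Set Strict Implicit. Set Printing Implicit Defensive.

Theorem lemma3p1 (R : realType) (n d : nat) (BJ : 'M[R]_n)
  (Bs : 'I_d -> 'M[R]_n) (lambda : R) :
  mx_le 0 BJ ->
  is_splitting BJ Bs ->
  is_spectral_radius (iterT Bs) lambda ->
  0 < lambda ->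
  exists alpha : 'I_d -> 'cV[R]_n,
    let x := \mxcol_(p < d) alpha p in
    [/\ x != 0,
        mx_le 0 x,
        iterT Bs *m x = lambda *: x,
        lambda <= 1 ->
          [/\ forall p : 'I_d, mx_le 0 (lambda *: alpha p),
              forall p q : 'I_d, val p = 0%N -> val q = d.-1 ->
                mx_le (lambda *: alpha p) (alpha q) &
              forall p q : 'I_d, val q = (val p).+1 -> mx_le (alpha q) (alpha p)] &
        1 <= lambda ->
          [/\ forall p : 'I_d, mx_le 0 (alpha p),
              forall p q : 'I_d, val p = 0%N -> val q = d.-1 ->
                mx_le (alpha q) (lambda *: alpha p) &
              forall p q : 'I_d, val q = (val p).+1 -> mx_le (alpha p) (alpha q)]].
Proof.
move=> BJ_ge0 splitting rho lam_gt0.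
have Bs_ge0 := splitting_ge0 BJ_ge0 splitting.
have [h [h_ge0 h_neq0 Th]] := spectral_radius_eigenvector (iterT_ge0 Bs_ge0) rho.
pose alpha : 'I_d -> 'cV[R]_n := submxcol h.
have a_ge0 : forall p, mx_le 0 (alpha p) by apply/mxcol_ge0P; rewrite /alpha submxcolK.
have Talpha : iterT Bs *m \mxcol_p alpha p = lambda *: \mxcol_p alpha p.
  by rewrite /alpha submxcolK.
have step p q (qE : val q = (val p).+1) := mx_le_eigen_gap lam_gt0
  (mulmx_ge0 (Bs_ge0 p) (a_ge0 p)) (eigen_blocks_step Talpha qE).
have wrap p q (pE : val p = 0%N) (qE : val q = d.-1) := mx_le_eigen_gap lam_gt0
  (mulmx_ge0 (Bs_ge0 q) (a_ge0 q)) (eigen_blocks_wrap Talpha pE qE).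
exists alpha; cbv zeta; rewrite submxcolK; split=> //.
- move=> lam_le1; split=> [p i j|p q pE qE|p q qE].
  + by have := a_ge0 p i j; rewrite !mxE; apply: mulr_ge0 (ltW lam_gt0).
  + exact: (wrap p q pE qE).1.
  + exact: (step p q qE).1.
- move=> lam_ge1; split=> [p|p q pE qE|p q qE].
  + exact: a_ge0.
  + exact: (wrap p q pE qE).2.
  + exact: (step p q qE).2.
Qed.
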